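(* In the FIND setting of the context, fix a leaf cluster $\mathcal C_r$ of $\mathcal T$ and a consistent ordering of $\mathcal T_r^+$. If $\mathcal C_i$ is a leaf node of $\mathcal T_r^+$, then $\boldsymbol\Sigma_i(\mathcal C_i,\mathcal C_i)=\boldsymbol\Sigma(\mathcal C_i,\mathcal C_i)$.
   Context: Setting (FIND). $\mathcal M$ is a finite set of mesh nodes; $\mathbf A$ is an invertible complex matrix indexed by $\mathcal M\times\mathcal M$, structurally symmetric ($A_{ij}\neq0\iff A_{ji}\neq0$); distinct nodes $i,j$ are connected if $A_{ij}\neq 0$. $\boldsymbol\Sigma$ is a complex matrix indexed by $\mathcal M\times\mathcal M$ with $\Sigma_{ij}=0$ whenever $i\neq j$ and $i,j$ are not connected. $\dagger$ is conjugate transpose, $\mathbf X^{-\dagger}=(\mathbf X^{-1})^\dagger$. $\mathbf X(X,Y)$ is the submatrix with rows in $X$, columns in $Y$. For a cluster $\mathcal C\subseteq\mathcal M$: boundary set $\mathcal B_{\mathcal C}=\{i\in\mathcal C: A_{ij}\neq 0\text{ for some } j\notin\mathcal C\}$, inner set $\mathcal I_{\mathcal C}=\mathcal C\setminus\mathcal B_{\mathcal C}$; for $\mathcal C_g$ write $\mathcal B_g,\mathcal I_g$. Cluster tree: $\mathcal T$ is a rooted binary tree of clusters with root $\mathcal M$, each non-leaf cluster the disjoint union of its two children. For a leaf $\mathcal C_r$ with path $r=a_0,\dots,a_d$ (root) and $b_k$ the sibling of $a_k$, the augmented tree $\mathcal T_r^+$ has root $\mathcal C_{-r}=\mathcal M\setminus\mathcal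 C_r$; for $0\le k\le d-2$, $\mathcal C_{-a_k}=\mathcal M\setminus\mathcal C_{a_k}$ has children $\mathcal C_{b_k}$ and $\mathcal C_{-a_{k+1}}$, with $\mathcal C_{-a_{d-1}}$ identified with $\mathcal C_{b_{d-1}}$; each basic cluster $\mathcal C_{b_k}$ carries its subtree from $\mathcal T$. Private inner nodes: $\mathcal S_g=\mathcal I_g$ for a leaf $g$ of $\mathcal T_r^+$; $\mathcal S_g=\mathcal I_g\setminus(\mathcal I_i\cup\mathcal I_j)$ if $g$ has children $i,j$. Consistent ordering: a total order $g_1,\dots,g_m$ of the nodes of $\mathcal T_r^+$ with every node after all its descendants. Elimination: $\mathbf A_{g_1}=\mathbf A$, $\boldsymbol\Sigma_{g_1}=\boldsymbol\Sigma$; for each $g$ (with $\mathbf A_g(\mathcal S_g,\mathcal S_g)$ invertible), $\mathcal L_g=\mathbf A_g(\mathcal B_g,\mathcal S_g)\mathbf A_g(\mathcal S_g,\mathcal S_g)^{-1}$, $\mathbf L_g$ is the identity on $\mathcal M$ except $\mathbf L_g(\mathcal B_g,\mathcal S_g)=\mathcal L_g$, $\mathbf A_{g+}=\mathbf L_g^{-1}\mathbf A_g$, $\boldsymbol\Sigma_{g+}=\mathbf L_g^{-1}\boldsymbol\Sigma_g\mathbf L_g^{-\dagger}$, and $\mathbf A_{g_{t+1}}=\mathbf A_{g_t+}$, $\boldsymbol\Sigma_{g_{t+1}}=\boldsymbol\Sigma_{g_t+}$. Thus $\boldsymbol\Sigma_i$ is the matrix just before eliminating $\mathcal S_i$. 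*)

(* Mesh nodes are 'I_n; scalars live in an arbitrary
   numeric closed field C (e.g. the complex numbers), which has a conjugation. *)
From mathcomp Require Import all_boot all_order all_algebra.
Set Implicit Arguments. Unset Strict Implicit. Unset Printing Implicit Defensive.
Import Order.TTheory GRing.Theory Num.Theory.
Local Open Scope ring_scope.

Section FIND.
Variables (C : numClosedFieldType) (n : nat).
Notation node := 'I_n.
Notation mx := 'M[C]_n.

Definition subm (R S : {set node}) (X : mx) : 'M[C]_(#|R|, #|S|) :=
  \matrix_(i, j) X (enum_val i) (enum_val j).

Definition embed (R S : {set node}) (Y : 'M[C]_(#|R|, #|S|)) : mx :=
  \sum_(i < #|R|) \sum_(j < #|S|) Y i j *: delta_mx (enum_val i) (enum_val j).

Definition ctrmx (X : mx) : mx := (map_mx (@Num.conj C) X)^T.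

Definition bset (A : mx) (K : {set node}) : {set node} :=
  [set i in K | [exists j, (j \notin K) && (A i j != 0)]].
Definition iset (A : mx) (K : {set node}) : {set node} := K :\: bset A K.

End FIND.

Inductive ctree (n : nat) :=
  | CLeaf of {set 'I_n}
  | CNode of {set 'I_n} & ctree n & ctree n.
Arguments CLeaf {n}.
Arguments CNode {n}.

Definition cl n (t : ctree n) : {set 'I_n} :=
  match t with CLeaf K => K | CNode K _ _ => K end.

Fixpoint wf_ctree n (t : ctree n) : bool :=
  match t with
  | CLeaf _ => true
  | CNode K l r => [&& K == cl l :|: cl r, [disjoint cl l & cl r],
                       wf_ctree l & wf_ctree r]
  end.

Definition cluster_tree n (t : ctree n) : bool := wf_ctree t && (cl t == setT).

(* Nodes are addressed by positions: paths from the root (false = left child,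
   true = right child). *)
Fixpoint subtree_at n (t : ctree n) (p : seq bool) : option (ctree n) :=
  match p, t with
  | [::], _ => Some t
  | b :: p', CNode _ l r => subtree_at (if b then r else l) p'
  | _ :: _, CLeaf _ => None
  end.

(* Augmented tree T_r^+ for the leaf C_r at position p of t.  Walking down the
   path a_d (root), ..., a_0 = r, at a_{k+1} with on-path child a_k and
   sibling b_k we build C_{-a_k}: it is the subtree of b_{d-1} when k = d-1,
   and otherwise the node (M \ C_{a_k}) with children (subtree of b_k) and
   C_{-a_{k+1}}.  The result is C_{-a_0} = C_{-r} with its subtree.
   Returns None if p does not lead to a leaf or if r is the root (d = 0). *)
Fixpoint augment_rec n (t : ctree n) (p : seq bool) (acc : option (ctree n))
  : option (ctree n) :=
  match p, t with
  | [::], CLeaf _ => acc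
  | b :: p', CNode _ l r =>
      let on := if b then r else l in
      let off := if b then l else r in
      augment_rec on p'
        (Some (match acc with
               | None => off
               | Some a => CNode (setT :\: cl on) off a
               end))
  | _, _ => None
  end.
Definition augment n (t : ctree n) (p : seq bool) := augment_rec t p None.

Definition consistent_ordering n (t : ctree n) (ord : seq (seq bool)) : Prop :=
  [/\ uniq ord,
      (forall p, p \in ord <-> subtree_at t p <> None) &
      (forall p q, p \in ord -> q \in ord -> prefix p q -> p != q ->
         (index q ord < index p ord)%N)].

Section Elim.
Variables (C : numClosedFieldType) (n : nat) (A : 'M[C]_n).
(* A is the original matrix; boundary sets are taken w.r.t. A. *)

Definition pset (g : ctree n) : {set 'I_n} :=
  match g with
  | CLeaf K => iset A K
  | CNode K l r => iset A K :\: (iset A (cl l) :|: iset A (cl r))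
  end.

Definition Lmat (g : ctree n) (Ag : 'M[C]_n) : 'M[C]_n :=
  let B := bset A (cl g) in
  let S := pset g in
  1%:M + embed (subm B S Ag *m invmx (subm S S Ag)).

Definition elim_step (g : ctree n) (st : 'M[C]_n * 'M[C]_n) :=
  let Li := invmx (Lmat g st.1) in
  (Li *m st.1, Li *m st.2 *m ctrmx Li).

(* (A_{g_{k+1}}, Sigma_{g_{k+1}}) : the state after eliminating g_1..g_k *)
Definition elim_state (t : ctree n) (ord : seq (seq bool)) (Sig : 'M[C]_n)
  (k : nat) : 'M[C]_n * 'M[C]_n :=
  foldl (fun st p => match subtree_at t p with
                     | Some g => elim_step g st
                     | None => st end) (A, Sig) (take k ord).

Definition elim_defined (t : ctree n) (ord : seq (seq bool)) (Sig : 'M[C]_n) :=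
  forall k, (k < size ord)%N ->
    match subtree_at t (nth [::] ord k) with
    | Some g => is_true (subm (pset g) (pset g) (elim_state t ord Sig k).1 \in unitmx)
    | None => True
    end.

End Elim.

(* Eliminating S_g multiplies Sigma on both sides by L_g^-1 = 1 - E_g, where
   E_g is supported on B_g x S_g.  Since B_g and S_g are disjoint, the step only
   touches rows and columns of Sigma indexed by B_g, a subset of C_g.  Every node
   g eliminated before a leaf C_i is neither an ancestor of C_i (consistent
   ordering) nor a descendant (C_i is a leaf), so C_g and C_i are disjoint and
   the block Sigma(C_i, C_i) is never touched. *)
From mathcomp Require Import all_boot all_order all_algebra.
Set Implicit Arguments. Unset Strict Implicit. Unset Printing Implicit Defensive.
Import Order.TTheory GRing.Theory Num.Theory.
Local Open Scope ring_scope.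

Section UnipotentCongruence.
Variables (C : numClosedFieldType) (n : nat).

Lemma embed_out (R S : {set 'I_n}) (Y : 'M[C]_(#|R|, #|S|)) x y :
  (x \notin R) || (y \notin S) -> embed Y x y = 0.
Proof.
move=> xy_out; rewrite /embed summxE big1 // => i _; rewrite summxE big1 // => j _.
rewrite !mxE; case: eqP => [ex|]; last by rewrite mulr0.
case: eqP => [ey|]; last by rewrite mulr0.
by move: xy_out; rewrite ex ey !enum_valP.
Qed.

Lemma mulmx_id_row (P M : 'M[C]_n) x y :
  (forall j, P x j = 1%:M x j) -> (P *m M) x y = M x y.
Proof.
move=> Px; rewrite -[in RHS](mul1mx M) !mxE.
by apply: eq_bigr => j _; rewrite Px.
Qed.

Lemma mulmx_id_col (P M : 'M[C]_n) x y :
  (forall j, P j y = 1%:M j y) -> (M *m P) x y = M x y.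
Proof.
move=> Py; rewrite -[in RHS](mulmx1 M) !mxE.
by apply: eq_bigr => j _; rewrite Py.
Qed.

Variables (B S : {set 'I_n}) (Y : 'M[C]_(#|B|, #|S|)).
Hypothesis disjoint_BS : [disjoint B & S].

Lemma embed_mulmx_embed : embed Y *m embed Y = 0.
Proof.
apply/matrixP => a b; rewrite !mxE big1 // => j _.
have [jB | jNB] := boolP (j \in B).
  by rewrite (@embed_out _ _ _ a j) ?mul0r // (disjointFr disjoint_BS jB) orbT.
by rewrite (@embed_out _ _ _ j b) ?mulr0 ?jNB.
Qed.

Lemma invmx_1_add_embed : invmx (1%:M + embed Y) = 1%:M - embed Y.
Proof.
have inv_right : (1%:M + embed Y) *m (1%:M - embed Y) = 1%:M.
  by rewrite mulmxDl !mulmxBr !mul1mx mulmx1 embed_mulmx_embed subr0 subrK.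
have [unit_L _] := mulmx1_unit inv_right.
by rewrite -[RHS](mulKmx unit_L) inv_right mulmx1.
Qed.

Lemma invmx_1_add_embed_row x j :
  x \notin B -> invmx (1%:M + embed Y) x j = 1%:M x j.
Proof.
by move=> xNB; rewrite invmx_1_add_embed !mxE (@embed_out _ _ _ x j) ?xNB ?subr0.
Qed.

Lemma congr_invmx_1_add_embed_out (M : 'M[C]_n) x y :
  x \notin B -> y \notin B ->
  let Li := invmx (1%:M + embed Y) in (Li *m M *m ctrmx Li) x y = M x y.
Proof.
move=> xNB yNB Li; rewrite mulmx_id_col => [|j].
  by rewrite mulmx_id_row // => j; apply: invmx_1_add_embed_row.
by rewrite !mxE invmx_1_add_embed_row // !mxE conjC_nat eq_sym.
Qed.

End UnipotentCongruence.

Section EliminationStep.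
Variables (C : numClosedFieldType) (n : nat) (A : 'M[C]_n).

Lemma bset_sub (K : {set 'I_n}) : bset A K \subset K.
Proof. by apply/subsetP => x; rewrite inE => /andP[]. Qed.

Lemma pset_sub (g : ctree n) : pset A g \subset iset A (cl g).
Proof. by case: g => [K|K l r] //=; apply: subsetDl. Qed.

Lemma disjoint_bset_pset (g : ctree n) : [disjoint bset A (cl g) & pset A g].
Proof.
by have := pset_sub g; rewrite subsetD disjoint_sym => /andP[].
Qed.

Lemma elim_step_out (g : ctree n) (st : 'M[C]_n * 'M[C]_n) x y :
  x \notin cl g -> y \notin cl g -> (elim_step A g st).2 x y = st.2 x y.
Proof.
have notin_bset z : z \notin cl g -> z \notin bset A (cl g).
  by apply: contra; apply: (subsetP (bset_sub _)).
move=> /notin_bset xNB /notin_bset yNB.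
exact: (congr_invmx_1_add_embed_out _ (disjoint_bset_pset g)).
Qed.

Lemma elim_fold_on_disjoint (t : ctree n) (ps : seq (seq bool)) st
    (K : {set 'I_n}) x y :
  (forall p g, p \in ps -> subtree_at t p = Some g -> [disjoint cl g & K]) ->
  x \in K -> y \in K ->
  (foldl (fun st p => match subtree_at t p with
                      | Some g => elim_step A g st
                      | None => st end) st ps).2 x y = st.2 x y.
Proof.
elim: ps st => [|p ps IH] st //= disj_ps xK yK.
rewrite IH //; last by move=> q g qps; apply: disj_ps; rewrite inE qps orbT.
case Ep: (subtree_at t p) => [g|] //.
have disj_g := disj_ps p g (mem_head _ _) Ep.
by rewrite elim_step_out // (disjointFl disj_g).
Qed.

End EliminationStep.

Section AugmentedTree.
Variable n : nat.

Definition augment_inv (K : {set 'I_n}) (acc : option (ctree n)) : bool :=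
  match acc with
  | None => K == setT
  | Some a => wf_ctree a && (cl a == ~: K)
  end.

Lemma augment_inv_step (K : {set 'I_n}) (on off : ctree n) acc :
  cl on :|: cl off = K -> [disjoint cl on & cl off] -> wf_ctree off ->
  augment_inv K acc ->
  augment_inv (cl on) (Some (match acc with
                             | None => off
                             | Some a => CNode (setT :\: cl on) off a
                             end)).
Proof.
move=> defK disj wf_off; have disjC := disjoint_setI0 disj.
case: acc => [a /andP[wf_a /eqP cl_a] | /eqP K_T] /=.
  rewrite setTD eqxx wf_a wf_off cl_a -defK !andbT; apply/andP; split.
    apply/eqP/setP => x; rewrite !inE; move/setP/(_ x): disjC.
    by rewrite !inE; case: (x \in cl on); case: (x \in cl off).
  by rewrite -setI_eq0 setCU setIA (setIC (cl off)) -setIA setICr setI0.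
rewrite wf_off andTb; apply/eqP/setP => x; move/setP/(_ x): K_T.
move/setP/(_ x): disjC; rewrite -defK !inE.
by case: (x \in cl on); case: (x \in cl off).
Qed.

Lemma augment_rec_wf (t : ctree n) p acc res :
  wf_ctree t -> augment_inv (cl t) acc -> augment_rec t p acc = Some res ->
  wf_ctree res.
Proof.
elim: p t acc => [|b p IH] [K|K l r] acc //= wf_t inv.
  by case: acc inv => // a /andP[wf_a _] [<-].
case/and4P: wf_t => /eqP defK disj wf_l wf_r; apply: IH; first by case: b.
case: b; apply: augment_inv_step => //.
- by rewrite disjoint_sym.
- by rewrite setUC -defK.
- by rewrite -defK.
Qed.

Lemma augment_wf (t : ctree n) p res :
  cluster_tree t -> augment t p = Some res -> wf_ctree res.
Proof. by case/andP=> wf_t cl_t; apply: augment_rec_wf. Qed.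

End AugmentedTree.

Section Positions.
Variable n : nat.
Implicit Types (t g h : ctree n) (p q : seq bool).

Lemma subtree_at_sub t p g :
  wf_ctree t -> subtree_at t p = Some g -> cl g \subset cl t.
Proof.
elim: p t => [|b p IH] [K|K l r] //=; [by move=> _ [<-] | by move=> _ [<-] |].
case/and4P => /eqP -> _ wf_l wf_r /IH.
by case: b => /(_ _) sub; apply: subset_trans (sub _) _;
  rewrite ?subsetUl ?subsetUr.
Qed.

Lemma subtree_at_disjoint t p q g h :
  wf_ctree t -> subtree_at t p = Some g -> subtree_at t q = Some h ->
  ~~ prefix p q -> ~~ prefix q p -> [disjoint cl g & cl h].
Proof.
elim: p t q => [|b p IH] t [|c q] //=; rewrite ?prefix0s //.
case: t => [K|K l r] //= /and4P[_ disj wf_l wf_r] Eg Eh.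
have [eq_bc|neq_bc] := eqVneq b c.
  by subst c; case: b Eg Eh => Eg Eh; apply: IH Eg Eh.
move=> _ _; have sub_g := subtree_at_sub _ Eg; have sub_h := subtree_at_sub _ Eh.
move: neq_bc sub_g sub_h {Eg Eh}; case: b; case: c => //= _ sub_g sub_h.
  by rewrite disjoint_sym in disj; apply: disjointW (sub_g _) (sub_h _) disj.
exact: disjointW (sub_g _) (sub_h _) disj.
Qed.

Lemma subtree_at_leaf_ext t p s K :
  subtree_at t p = Some (CLeaf K) -> subtree_at t (p ++ s) <> None -> s = [::].
Proof.
elim: p t => [|b p IH] [K'|K' l r] //=; last exact: IH.
by case: s.
Qed.

Lemma consistent_ordering_leaf_disjoint t ord pi K p g :
  wf_ctree t -> consistent_ordering t ord -> subtree_at t pi = Some (CLeaf K) ->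
  p \in take (index pi ord) ord -> subtree_at t p = Some g ->
  [disjoint cl g & K].
Proof.
move=> wf_t [_ mem_ord ord_prefix] Epi p_before Ep.
have pi_ord : pi \in ord by apply/mem_ord; rewrite Epi.
have p_ord : p \in ord by apply/mem_ord; rewrite Ep.
have lt_p_pi : (index p ord < index pi ord)%N.
  rewrite -[ord in index p ord](cat_take_drop (index pi ord)) index_cat p_before.
  apply: (@leq_trans (size (take (index pi ord) ord))); first by rewrite index_mem.
  by rewrite size_take; case: ltnP.
have neq_p_pi : p != pi by apply: contraTneq lt_p_pi => ->; rewrite ltnn.
apply: (subtree_at_disjoint wf_t Ep Epi).
  apply/negP => pre; have := ord_prefix _ _ p_ord pi_ord pre neq_p_pi.
  by rewrite ltnNge ltnW.
apply/negP => /prefixP[s def_p].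
have s0 := subtree_at_leaf_ext Epi (_ : subtree_at t (pi ++ s) <> None).
by move: neq_p_pi; rewrite def_p s0 ?cats0 ?eqxx // -def_p; apply/mem_ord.
Qed.

End Positions.

Theorem corollary3 (C : numClosedFieldType) (n : nat)
  (A Sig : 'M[C]_n)
  (HAinv : A \in unitmx)
  (HAsym : forall i j : 'I_n, (A i j != 0) = (A j i != 0))
  (HSig : forall i j : 'I_n, i != j -> A i j = 0 -> Sig i j = 0)
  (T : ctree n) (HT : cluster_tree T)
  (pr : seq bool) (Cr : {set 'I_n}) (Hr : subtree_at T pr = Some (CLeaf Cr))
  (Tp : ctree n) (HTp : augment T pr = Some Tp)
  (ord : seq (seq bool)) (Hord : consistent_ordering Tp ord)
  (Hdef : elim_defined A Tp ord Sig)
  (pi : seq bool) (Ci : {set 'I_n}) (Hi : subtree_at Tp pi = Some (CLeaf Ci)) :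
  subm Ci Ci (elim_state A Tp ord Sig (index pi ord)).2 = subm Ci Ci Sig.
Proof.
have wf_Tp := augment_wf HT HTp.
apply/matrixP => a b; rewrite !mxE.
apply: elim_fold_on_disjoint (enum_valP a) (enum_valP b) => p g.
exact: consistent_ordering_leaf_disjoint.
Qed.
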